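(* If $f,g\in\operatorname{Aut}_{adm}\mathcal M$, then for all $a,b\in\mathbb Z(p)$ with $a\le b<ap^{N_0}$, $$\alpha_{ab0}(fg)=\sum_{c\in\mathbb Z(p)}\alpha_{ac0}(f)\alpha_{cb0}(g),$$ where $fg$ denotes the composition ''first $f$, then $g$'', i.e. $(fg)(x)=g(f(x))$.
   Context: Let $p$ be a prime, $N_0\in\mathbb N$, $k=\mathbb F_{p^{N_0}}$, $K=k((t))$, $\sigma$ Frobenius, $\mathbb Z(p)=\{a\in\mathbb N:p\nmid a\}$. Let $\mathcal M=I(p)^{ab}\otimes\mathbb F_p$, where $I(p)^{ab}$ is the image of the inertia subgroup in the abelianization of the Galois group of the maximal $p$-extension of $K$, and $\mathcal M_k=\mathcal M\otimes_{\mathbb F_p}k$. There is a standard set of free topological generators $\{D_{an}: a\in\mathbb Z(p), n\in\mathbb Z/N_0\mathbb Z\}$ of the $k$-module $\mathcal M_k$ with $(\sigma\otimes\cdot)$-compatibility $D_{an}=(\mathrm{id}\otimes\sigma^n)D_{a0}$ (namely $D_{an}=\sum_r\sigma^n(\alpha_r)\otimes D_a^{(r)}$ for a $\mathbb Z_p$-basis dual pair; concretely, for any $\mathbb F_p$-linear $f$ extended $k$-linearly, $f(D_{a0})=\sum\alpha_{abn}D_{bn}$ implies $f(D_{am})=\sum\sigma^m(\alpha_{abn})D_{b,n+m}$). For a continuous $\mathbb F_p$-linear automorphism $f$ of $\mathcal M$, extended $k$-linearly to $\mathcal M_k$, define $\alpha_{abn}(f)\in k$ by $f(D_{a0})=\sum_{b\in\mathbb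 Z(p),n\in\mathbb Z/N_0}\alpha_{abn}(f)D_{bn}$, with $\alpha_{abn}(f)=0$ if $p\mid a$ or $p\mid b$. $\operatorname{Aut}_{adm}\mathcal M$ is the set of continuous $\mathbb F_p$-linear automorphisms $f$ of $\mathcal M$ such that $\alpha_{a,b,m\bmod N_0}(f)=0$ whenever $a,b\in\mathbb Z(p)$, $-N_0<m\le0$ and $bp^m<a$. *)

From HB Require Import structures.
From mathcomp Require Import all_boot all_order all_algebra.
Set Implicit Arguments. Unset Strict Implicit. Unset Printing Implicit Defensive.
Import GRing.Theory.
Local Open Scope ring_scope.

Definition Zpr (p : nat) := {a : nat | ~~ (p %| a)%N}.

(* M_k = (completed) free k-module on the D_{an}, a in Z(p), n in Z/N0Z,
   with N0 = N.+1; it is the product  prod_{a,n} k D_{an}  (product topology),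
   so an element is its family of coordinates. *)
Definition Mk (p N : nat) (k : Type) := Zpr p -> 'I_N.+1 -> k.

Section Defs.
Variables (p N : nat) (k : fieldType).

Definition basisD (a : Zpr p) (n : 'I_N.+1) : Mk p N k :=
  fun b m => if (val b == val a) && (m == n) then 1 else 0.

Definition frob (x : k) : k := x ^+ p.

(* id (x) sigma on M_k:  D_{an} |-> D_{a,n+1}, sigma-semilinear *)
Definition phi (x : Mk p N k) : Mk p N k :=
  fun b m => frob (x b (m - inord 1)%R).

Definition klinear (F : Mk p N k -> Mk p N k) :=
  forall (c : k) (x y : Mk p N k),
    F (fun a n => c * x a n + y a n) = fun a n => c * F x a n + F y a n.

(* continuity for the product topology (k finite, discrete): each output
   coordinate depends only on finitely many input coordinates *)
Definition Mcontinuous (F : Mk p N k -> Mk p N k) :=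
  forall (b : Zpr p) (m : 'I_N.+1), exists S : seq (Zpr p * 'I_N.+1),
    forall x y : Mk p N k,
      (forall i, i \in S -> x i.1 i.2 = y i.1 i.2) -> F x b m = F y b m.

(* F is the k-linear extension f (x) id of a continuous F_p-linear
   automorphism f of M = (M_k)^{id (x) sigma} *)
Definition isAutM (F : Mk p N k -> Mk p N k) :=
  [/\ klinear F, Mcontinuous F, (forall x, F (phi x) = phi (F x)) & bijective F].

(* alpha_{abn}(f):  f(D_{a0}) = sum alpha_{abn} D_{bn}; zero if p|a or p|b *)
Definition alpha (F : Mk p N k -> Mk p N k) (a b : nat) (n : 'I_N.+1) : k :=
  match (insub a : option (Zpr p)), (insub b : option (Zpr p)) with
  | Some a', Some b' => F (basisD a' ord0) b' n
  | _, _ => 0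
  end.

(* Aut_adm M : alpha_{a,b,m mod N0} = 0 for -N0 < m <= 0 and b p^m < a;
   written with m = -j, j in {0..N0-1}:  b < a p^j *)
Definition admissible (F : Mk p N k -> Mk p N k) :=
  isAutM F /\
  forall (a b : nat) (j : 'I_N.+1), ~~ (p %| a)%N -> ~~ (p %| b)%N ->
    (b < a * p ^ j)%N -> alpha F a b (- j)%R = 0.

End Defs.

(* By continuity and
   k-linearity, G(F(D_{a0}))_{b0} is the finite sum of the terms
   alpha_{acn}(F) * G(D_{cn})_{b0}, and only those with n = 0 and c <= b survive.
   For n = 0 and c > b, alpha_{cb0}(G) = 0 by admissibility of G.  For n <> 0,
   G commutes with id (x) sigma, so G(D_{cn})_{b0} = sigma^n(alpha_{c,b,-n}(G));
   admissibility of F kills the term when c < a p^(N0-n), that of G when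
   b < c p^n, and otherwise b >= c p^n >= a p^N0, which is excluded. *)

From HB Require Import structures.
From mathcomp Require Import all_boot all_order all_algebra.
From Stdlib Require Import FunctionalExtensionality.
Set Implicit Arguments.
Unset Strict Implicit.
Unset Printing Implicit Defensive.
Import GRing.Theory.
Local Open Scope ring_scope.

Section KLinear.
Variables (p N : nat) (k : fieldType) (G : Mk p N k -> Mk p N k).
Hypothesis linG : klinear G.

Lemma klinearP (c : k) (x y z : Mk p N k) :
  (forall a n, z a n = c * x a n + y a n) ->
  forall a n, G z a n = c * G x a n + G y a n.
Proof.
move=> zE a n.
have -> : z = fun a n => c * x a n + y a n.
  by do 2!apply: functional_extensionality => ?; apply: zE.
by rewrite linG.
Qed.

Lemma klinear0 (z : Mk p N k) : (forall a n, z a n = 0) -> forall a n, G z a n = 0.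
Proof.
move=> z0 a n.
have : G z a n = 1 * G z a n + G z a n by apply: klinearP => ??; rewrite z0 mulr0 addr0.
by rewrite mul1r -{1}[G z a n]addr0 => /addrI.
Qed.

Lemma klinear_sum (I : Type) (r : seq I) (w : I -> k) (f : I -> Mk p N k) a n :
  G (fun c m => \sum_(i <- r) w i * f i c m) a n = \sum_(i <- r) w i * G (f i) a n.
Proof.
elim: r a n => [|i r IHr] a n.
  by rewrite big_nil klinear0 // => ??; rewrite big_nil.
by rewrite big_cons -IHr; apply: klinearP => ??; rewrite big_cons.
Qed.

End KLinear.

Section Basis.
Variables (p N : nat) (k : fieldType).

Lemma basisDE (a b : Zpr p) (n m : 'I_N.+1) :
  basisD k a n b m = ((b, m) == (a, n))%:R.
Proof. by rewrite /basisD xpair_eqE val_eqE; case: (_ && _). Qed.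

Lemma sum_basisD (s : seq (Zpr p * 'I_N.+1)) (w : Zpr p * 'I_N.+1 -> k) c n :
  uniq s ->
  \sum_(i <- s) w i * basisD k i.1 i.2 c n = if (c, n) \in s then w (c, n) else 0.
Proof.
move=> s_uniq; case: ifPn => [cn_s | cn_s].
  rewrite (bigD1_seq (c, n)) //= basisDE eqxx mulr1 big1 ?addr0 // => i.
  by rewrite basisDE -surjective_pairing eq_sym => /negbTE->; rewrite mulr0.
rewrite big1_seq // => i /= i_s; rewrite basisDE -surjective_pairing.
by case: eqP i_s cn_s => [<- ->|] //; rewrite mulr0.
Qed.

End Basis.

Section Continuity.
Variables (p N : nat) (k : fieldType) (G : Mk p N k -> Mk p N k).
Hypotheses (linG : klinear G) (contG : Mcontinuous G).

Lemma Mcontinuous_coord_eq0 (x : Mk p N k) b m :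
  (forall c n, x c n * G (basisD k c n) b m = 0) -> G x b m = 0.
Proof.
move=> x0; have [S SG] := contG b m.
pose xS c n := \sum_(i <- undup S) x i.1 i.2 * basisD k i.1 i.2 c n.
rewrite (SG x xS) => [|[c n] cn_S].
  by rewrite klinear_sum // big1 // => -[c n].
by rewrite /xS sum_basisD ?undup_uniq ?mem_undup ?cn_S.
Qed.

Lemma Mcontinuous_expand (s : seq (Zpr p * 'I_N.+1)) (x : Mk p N k) b m :
  uniq s -> (forall c n, (c, n) \notin s -> x c n * G (basisD k c n) b m = 0) ->
  G x b m = \sum_(i <- s) x i.1 i.2 * G (basisD k i.1 i.2) b m.
Proof.
move=> s_uniq out0.
pose xs c n := \sum_(i <- s) x i.1 i.2 * basisD k i.1 i.2 c n.
have -> : G x b m = 1 * G (fun c n => x c n - xs c n) b m + G xs b m.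
  by apply: klinearP => // c n; rewrite mul1r subrK.
rewrite Mcontinuous_coord_eq0 ?mulr0 ?add0r => [|c n].
  exact: (klinear_sum linG).
rewrite /xs sum_basisD //; case: ifPn => [_|/out0]; first by rewrite subrr mul0r.
by rewrite subr0.
Qed.

End Continuity.

Section Frobenius.
Variables (p N : nat) (k : fieldType).
Hypothesis p_gt0 : (0 < p)%N.

Lemma frob0 : @frob p k 0 = 0.
Proof. by rewrite /frob expr0n eqn0Ngt p_gt0. Qed.

Lemma iter_frob0 j : iter j (@frob p k) 0 = 0.
Proof. by elim: j => //= j ->; rewrite frob0. Qed.

Lemma phi_basisD (c : Zpr p) (n : 'I_N.+1) :
  phi (basisD k c n) = basisD k c (n + inord 1).
Proof.
do 2!apply: functional_extensionality => ?.
rewrite /phi /basisD subr_eq.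
by case: ifP => _; rewrite ?frob0 // /frob expr1n.
Qed.

Lemma val_inord1 : val (inord 1 : 'I_N.+1) = (1 %% N.+1)%N.
Proof. by rewrite /inord val_insubd; case: N. Qed.

Lemma inZpS j : inZp j.+1 = inZp j + inord 1 :> 'I_N.+1.
Proof. by apply: val_inj; rewrite /= modnDml val_inord1 modnDmr addn1. Qed.

Lemma basisD_phi_shift (G : Mk p N k -> Mk p N k) :
  (forall x, G (phi x) = phi (G x)) -> forall (c b : Zpr p) (n m : 'I_N.+1),
  G (basisD k c n) b m = iter n (@frob p k) (G (basisD k c ord0) b (m - n)).
Proof.
move=> Gphi c b n m; rewrite -[n in LHS]valZpK -[n in m - n]valZpK.
elim: (val n) m => [|j IHj] m.
  by rewrite (_ : inZp 0 = ord0) ?subr0 //; apply: val_inj; rewrite /= mod0n.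
by rewrite inZpS -phi_basisD Gphi /phi IHj opprD addrA [m - _ - _]addrAC.
Qed.

Lemma val_opp_ord (n : 'I_N.+1) : n != ord0 -> val (- n) = (N.+1 - n)%N.
Proof.
by move=> n_neq0; rewrite /= modn_small // ltn_subrL ltn0Sn andbT lt0n.
Qed.

End Frobenius.

Section Admissible.
Variables (p N : nat) (k : fieldType).
Implicit Types F G : Mk p N k -> Mk p N k.

Lemma alphaE F (a b : Zpr p) n : alpha F (val a) (val b) n = F (basisD k a ord0) b n.
Proof. by rewrite /alpha !valK. Qed.

Lemma alpha_dvdr F a b n : (p %| b)%N -> alpha F a b n = 0.
Proof.
by move=> pb; rewrite /alpha (insubN (Zpr p) (_ : ~~ ~~ (p %| b)%N)) ?negbK //; case: insub.
Qed.

Lemma admissible_alpha0 F a b : admissible F ->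
  ~~ (p %| a)%N -> ~~ (p %| b)%N -> (b < a)%N -> alpha F a b ord0 = 0.
Proof.
by case=> _ admF pa pb ba; have := admF a b ord0 pa pb; rewrite oppr0 expn0 muln1; apply.
Qed.

Lemma admissible_comp_coord_eq0 F G (a b c : Zpr p) (n : 'I_N.+1) :
  (0 < p)%N -> admissible F -> admissible G -> (val b < val a * p ^ N.+1)%N ->
  ~~ ((n == ord0) && (val c <= val b)%N) ->
  F (basisD k a ord0) c n * G (basisD k c n) b ord0 = 0.
Proof.
move=> p_gt0 admF admG b_lt; have [[_ _ Gphi _] admG'] := admG.
have [-> /= c_gt | n_neq0 _] := eqVneq n ord0.
  by rewrite -(alphaE G) admissible_alpha0 ?mulr0 ?(valP c) ?(valP b) // ltnNge.
have [c_lt | c_ge] := ltnP (val c) (val a * p ^ val (- n)).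
  by rewrite -(alphaE F) -[n]opprK admF.2 ?mul0r ?(valP a) ?(valP c).
have [b_lt' | b_ge] := ltnP (val b) (val c * p ^ n).
  rewrite (basisD_phi_shift p_gt0 Gphi) sub0r -(alphaE G) admG' ?(valP c) ?(valP b) //.
  by rewrite iter_frob0 ?mulr0.
have : (val a * p ^ N.+1 <= val b)%N.
  rewrite -(subnK (ltnW (ltn_ord n))) expnD mulnA -val_opp_ord //.
  exact: leq_trans (leq_mul c_ge (leqnn _)) b_ge.
by rewrite leqNgt b_lt.
Qed.

End Admissible.

Theorem proposition2p2 (p N : nat) (k : finFieldType)
    (F G : Mk p N k -> Mk p N k) :
  prime p -> p \in [pchar k] -> #|k| = (p ^ N.+1)%N ->
  admissible F -> admissible G ->
  forall a b : nat, ~~ (p %| a)%N -> ~~ (p %| b)%N ->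
    (a <= b)%N -> (b < a * p ^ N.+1)%N ->
    exists n0 : nat,
      (forall c : nat, (n0 <= c)%N -> alpha F a c ord0 * alpha G c b ord0 = 0) /\
      alpha (G \o F) a b ord0 =
        \sum_(c < n0 | ~~ (p %| c)%N) alpha F a c ord0 * alpha G c b ord0.
Proof.
move=> p_prime _ _ admF admG a b pa pb _ b_lt; have p_gt0 := prime_gt0 p_prime.
exists b.+1; split=> [c c_gt | ].
  have [pc | pc] := boolP (p %| c)%N; first by rewrite alpha_dvdr ?mul0r.
  by rewrite (admissible_alpha0 admG) ?mulr0.
have [[linG contG _ _] _] := admG.
pose s := [seq (c, ord0 : 'I_N.+1) | c <- pmap insub (iota 0 b.+1) : seq (Zpr p)].
have s_uniq : uniq s.
  by rewrite map_inj_uniq ?pmap_sub_uniq ?iota_uniq // => c d [].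
rewrite (alphaE (G \o F) (Sub a pa) (Sub b pb)) /=.
rewrite (Mcontinuous_expand linG contG (s := s)) // => [|c n cn_s]; last first.
  apply: admissible_comp_coord_eq0 => //; apply: contra cn_s => /andP[/eqP-> c_le].
  by apply: map_f; rewrite mem_pmap_sub mem_iota.
rewrite big_map big_pmap.
rewrite -(big_mkord (fun c => ~~ (p %| c)%N) (fun c => alpha F a c ord0 * alpha G c b ord0)).
rewrite [RHS]big_mkcond /index_iota subn0.
apply: eq_bigr => c _; case: insubP => [c' _ <- | /negPf-> //] /=.
by rewrite (valP c') -!alphaE.
Qed.
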